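(* In the setting of the context (QFSR scheme: quadratic flux reconstruction in the solution), let $\mathcal{E}_j=(\Phi_{j+1/2}-\Phi_{j-1/2})/h$ evaluated on exact nodal values. If $\kappa_3=0$, then as $h\to0$ with derivatives at $x_j$, $$\mathcal{E}_j=\frac{\partial f}{\partial x}+\frac14\left[\Big(\kappa-\frac13\Big)\frac{\partial f}{\partial u}\frac{\partial^3u}{\partial x^3}+(\kappa+\theta_2-1)\frac{\partial^2 f}{\partial u^2}\frac{\partial u}{\partial x}\frac{\partial^2u}{\partial x^2}+\frac12\Big(\theta_2-\frac23\Big)\frac{\partial^3 f}{\partial u^3}\Big(\frac{\partial u}{\partial x}\Big)^3\right]h^2-\frac{\kappa-1}{8}\left[\frac{\partial D}{\partial x}\frac{\partial^3 u}{\partial x^3}+D(u(x_j))\frac{\partial^4 u}{\partial x^4}\right]h^3+O(h^4),$$ where $f$ denotes $f(u(x))$, $f$-derivatives in $u$ are evaluated at $u(x_j)$, and $\partial D/\partial x=\frac{d}{dx}D(u(x))$. In particular, $\kappa=1/3$ and $\theta_2=2/3$ give third-order accuracy.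
   Context: Let $h>0$, uniform grid $x_i=ih$, $i\in\mathbb{Z}$. Let $u$ be a smooth real function of $x$, $u_i=u(x_i)$; let $f$ (flux) and $D$ (dissipation coefficient) be smooth real functions of one variable. Define successive central differences $(u_x)_i=(u_{i+1}-u_{i-1})/(2h)$, $(u_{xx})_i=((u_x)_{i+1}-(u_x)_{i-1})/(2h)$. For the face $i+1/2$ with $j=i$, $k=i+1$, let $T_j=\frac h4((u_x)_k-(u_x)_j)-\frac{h^2}{4}(u_{xx})_j$, $T_k=\frac h4((u_x)_k-(u_x)_j)-\frac{h^2}{4}(u_{xx})_k$, and reconstructed states (parameters $\kappa,\kappa_3$) $u_L=\kappa\frac{u_j+u_k}{2}+(1-\kappa)[u_j+\frac h2(u_x)_j]+\kappa_3T_j$, $u_R=\kappa\frac{u_j+u_k}{2}+(1-\kappa)[u_k-\frac h2(u_x)_k]+\kappa_3T_k$. With $\Delta_L=u_L-u_j$, $\Delta_R=u_R-u_k$ and parameter $\theta_2$, the reconstructed fluxes are $f_L=f(u_j)+f'(u_j)\Delta_L+\frac{\theta_2}{2}f''(u_j)\Delta_L^2$ and $f_R=f(u_k)+f'(u_k)\Delta_R+\frac{\theta_2}{2}f''(u_k)\Delta_R^2$. Numerical flux: $\Phi_{i+1/2}=\frac12(f_L+f_R)-\frac12D_{i+1/2}(u_R-u_L)$, with $D_{i+1/2}=\bar D(u_i,u_{i+1})$ for a smooth symmetric $\bar D$ with $\bar D(v,v)=D(v)$. *)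

From Stdlib Require Import Reals Lra ZArith List.
From Coquelicot Require Import Coquelicot.
Open Scope R_scope.

Definition smooth1 (g : R -> R) : Prop :=
  forall (n : nat) (x : R), ex_derive (Derive_n g n) x.

(** Iterated partial derivatives of a function of two real variables,
    along a word of directions (true = first variable, false = second). *)
Fixpoint dpart (w : list bool) (g : R -> R -> R) : R -> R -> R :=
  match w with
  | nil => g
  | b :: w' =>
      let G := dpart w' g in
      if b then (fun s t => Derive (fun s' => G s' t) s)
      else (fun s t => Derive (fun t' => G s t') t)
  end.

Definition smooth2 (g : R -> R -> R) : Prop :=
  forall (w : list bool) (s t : R),
    ex_derive (fun s' => dpart w g s' t) s /\
    ex_derive (fun t' => dpart w g s t') t /\
    continuous (fun p : R * R => dpart w g (fst p) (snd p)) (s, t).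

Definition ux (U : Z -> R) (h : R) (i : Z) : R :=
  (U (i + 1)%Z - U (i - 1)%Z) / (2 * h).

Definition uxx (U : Z -> R) (h : R) (i : Z) : R :=
  (ux U h (i + 1)%Z - ux U h (i - 1)%Z) / (2 * h).

(** Reconstructed left/right states at face i+1/2 (j = i, k = i+1). *)
Definition T_j (U : Z -> R) (h : R) (i : Z) : R :=
  h / 4 * (ux U h (i + 1)%Z - ux U h i) - h ^ 2 / 4 * uxx U h i.

Definition T_k (U : Z -> R) (h : R) (i : Z) : R :=
  h / 4 * (ux U h (i + 1)%Z - ux U h i) - h ^ 2 / 4 * uxx U h (i + 1)%Z.

Definition uL (kappa kappa3 : R) (U : Z -> R) (h : R) (i : Z) : R :=
  kappa * ((U i + U (i + 1)%Z) / 2)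
  + (1 - kappa) * (U i + h / 2 * ux U h i)
  + kappa3 * T_j U h i.

Definition uR (kappa kappa3 : R) (U : Z -> R) (h : R) (i : Z) : R :=
  kappa * ((U i + U (i + 1)%Z) / 2)
  + (1 - kappa) * (U (i + 1)%Z - h / 2 * ux U h (i + 1)%Z)
  + kappa3 * T_k U h i.

Definition fL (f : R -> R) (kappa kappa3 theta2 : R) (U : Z -> R) (h : R)
  (i : Z) : R :=
  let dL := uL kappa kappa3 U h i - U i in
  f (U i) + Derive f (U i) * dL + theta2 / 2 * Derive_n f 2 (U i) * dL ^ 2.

Definition fR (f : R -> R) (kappa kappa3 theta2 : R) (U : Z -> R) (h : R)
  (i : Z) : R :=
  let dR := uR kappa kappa3 U h i - U (i + 1)%Z in
  f (U (i + 1)%Z) + Derive f (U (i + 1)%Z) * dR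
  + theta2 / 2 * Derive_n f 2 (U (i + 1)%Z) * dR ^ 2.

(** Numerical flux Phi_{i+1/2}. *)
Definition Phi (f : R -> R) (Dbar : R -> R -> R) (kappa kappa3 theta2 : R)
  (U : Z -> R) (h : R) (i : Z) : R :=
  1 / 2 * (fL f kappa kappa3 theta2 U h i + fR f kappa kappa3 theta2 U h i)
  - 1 / 2 * Dbar (U i) (U (i + 1)%Z)
      * (uR kappa kappa3 U h i - uL kappa kappa3 U h i).

Definition Err (f : R -> R) (Dbar : R -> R -> R) (kappa kappa3 theta2 : R)
  (U : Z -> R) (h : R) (j : Z) : R :=
  (Phi f Dbar kappa kappa3 theta2 U h j
   - Phi f Dbar kappa kappa3 theta2 U h (j - 1)%Z) / h.

Definition nodes (u : R -> R) (x0 h : R) : Z -> R :=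
  fun i => u (x0 + IZR i * h).

From Stdlib Require Import Reals ZArith Lra Lia.
From Coquelicot Require Import Coquelicot.
Open Scope R_scope.

(* With kappa3 = 0 and h <> 0 the flux Phi_{i+1/2} is an explicit polynomial in the
   nodal values u_{i-1}, ..., u_{i+2}, in f, f', f'' at u_i and u_{i+1}, and in
   Dbar (u_i, u_{i+1}).  Every ingredient of h E_0, evaluated at x0 + c h, has an
   expansion to order h^4 with an O(h^5) remainder (Taylor-Lagrange), and such jets
   are closed under sums, products and composition with smooth functions, so the
   expansion of h E_0 is obtained by polynomial arithmetic on Taylor coefficients.
   By symmetry Dbar (u_{-1}, u_0) = Dbar (u_0, u_{-1}), so only t |-> Dbar (u_0, t)
   is expanded; its slope at u_0 is D'(u_0) / 2, which is the one analytic fact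
   about Dbar that the dissipation term needs. *)

(** * Orders of magnitude as h -> 0+ *)

Definition bigO0 (n : nat) (g : R -> R) : Prop :=
  exists C d, 0 < d /\ forall h, 0 < h < d -> Rabs (g h) <= C * h ^ n.

Lemma bigO0_ext n g k :
  (forall h, 0 < h -> g h = k h) -> bigO0 n k -> bigO0 n g.
Proof.
  intros Hgk [C [d [Hd Hk]]]. exists C, d. split; [exact Hd|].
  intros h Hh. rewrite Hgk by lra. exact (Hk h Hh).
Qed.

Lemma bigO0_plus n g k :
  bigO0 n g -> bigO0 n k -> bigO0 n (fun h => g h + k h).
Proof.
  intros [C1 [d1 [Hd1 Hg]]] [C2 [d2 [Hd2 Hk]]].
  exists (C1 + C2), (Rmin d1 d2). split; [now apply Rmin_pos|].
  intros h [Hh0 Hh]. apply Rmin_Rgt_l in Hh as [Hh1 Hh2].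
  specialize (Hg h (conj Hh0 Hh1)). specialize (Hk h (conj Hh0 Hh2)).
  eapply Rle_trans; [apply Rabs_triang|]. lra.
Qed.

Lemma bigO0_mult m n g k :
  bigO0 m g -> bigO0 n k -> bigO0 (m + n) (fun h => g h * k h).
Proof.
  intros [C1 [d1 [Hd1 Hg]]] [C2 [d2 [Hd2 Hk]]].
  exists (C1 * C2), (Rmin d1 d2). split; [now apply Rmin_pos|].
  intros h [Hh0 Hh]. apply Rmin_Rgt_l in Hh as [Hh1 Hh2].
  rewrite Rabs_mult, pow_add.
  replace (C1 * C2 * (h ^ m * h ^ n)) with ((C1 * h ^ m) * (C2 * h ^ n)) by ring.
  apply Rmult_le_compat; auto using Rabs_pos.
Qed.

Lemma bigO0_const c : bigO0 0 (fun _ => c).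
Proof. exists (Rabs c), 1. split; [lra|]. intros h _. simpl. lra. Qed.

Lemma bigO0_pow n : bigO0 n (fun h => h ^ n).
Proof.
  exists 1, 1. split; [lra|]. intros h Hh.
  rewrite Rabs_pos_eq by (apply pow_le; lra). lra.
Qed.

Lemma Rle_pow_le1 h m n : 0 <= h <= 1 -> (m <= n)%nat -> h ^ n <= h ^ m.
Proof.
  intros Hh Hmn. replace n with (m + (n - m))%nat by lia. rewrite pow_add.
  assert (0 <= h ^ m) by (apply pow_le; lra).
  assert (h ^ (n - m) <= 1) by (rewrite <- (pow1 (n - m)); apply pow_incr; lra).
  nra.
Qed.

Lemma bigO0_weaken m n g : (m <= n)%nat -> bigO0 n g -> bigO0 m g.
Proof.
  intros Hmn [C [d [Hd Hg]]]. exists (Rabs C), (Rmin d 1).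
  split; [apply Rmin_pos; lra|].
  intros h [Hh0 Hh]. apply Rmin_Rgt_l in Hh as [Hh1 Hh2].
  eapply Rle_trans; [exact (Hg h (conj Hh0 Hh1))|].
  assert (0 <= h ^ n) by (apply pow_le; lra).
  assert (h ^ n <= h ^ m) by (apply Rle_pow_le1; [lra | exact Hmn]).
  pose proof (Rle_abs C). pose proof (Rabs_pos C). nra.
Qed.

Lemma bigO0_scal n c g : bigO0 n g -> bigO0 n (fun h => c * g h).
Proof. exact (bigO0_mult 0 n _ _ (bigO0_const c)). Qed.

Lemma bigO0_monomial n k c : (n <= k)%nat -> bigO0 n (fun h => c * h ^ k).
Proof. intros Hnk. apply bigO0_scal, (bigO0_weaken n k); [exact Hnk | apply bigO0_pow]. Qed.

Lemma bigO0_div_id n g : bigO0 (S n) g -> bigO0 n (fun h => g h / h).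
Proof.
  intros [C [d [Hd Hg]]]. exists C, d. split; [exact Hd|].
  intros h Hh. unfold Rdiv. rewrite Rabs_mult, Rabs_inv, (Rabs_pos_eq h) by lra.
  apply (Rmult_le_reg_r h); [lra|]. rewrite Rmult_assoc, Rinv_l, Rmult_1_r by lra.
  specialize (Hg h Hh). simpl in Hg. lra.
Qed.

Lemma bigO0_minus n g k :
  bigO0 n g -> bigO0 n k -> bigO0 n (fun h => g h - k h).
Proof.
  intros Hg Hk. apply (bigO0_ext _ _ (fun h => g h + -1 * k h)); [intros; ring|].
  exact (bigO0_plus _ _ _ Hg (bigO0_scal _ _ _ Hk)).
Qed.

Lemma bigO0_third_order g a b c :
  bigO0 4 (fun h => g h - (a + b * h ^ 2 - c * h ^ 3)) -> b = 0 ->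
  bigO0 3 (fun h => g h - a).
Proof.
  intros Hg ->.
  apply (bigO0_ext _ _ (fun h => (g h - (a + 0 * h ^ 2 - c * h ^ 3)) + - c * h ^ 3));
    [intros; ring|].
  apply bigO0_plus; [exact (bigO0_weaken 3 4 _ ltac:(lia) Hg) | apply bigO0_monomial; lia].
Qed.

(** * Jets of order four at 0+ *)

Definition poly4 (a0 a1 a2 a3 a4 x : R) : R :=
  a0 + a1 * x + a2 * x ^ 2 + a3 * x ^ 3 + a4 * x ^ 4.

Lemma bigO0_poly4 a0 a1 a2 a3 a4 : bigO0 0 (poly4 a0 a1 a2 a3 a4).
Proof.
  unfold poly4.
  apply (bigO0_ext _ _ (fun h => a0 * h ^ 0 + a1 * h ^ 1 + a2 * h ^ 2 + a3 * h ^ 3 + a4 * h ^ 4));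
    [intros; ring|].
  repeat apply bigO0_plus; apply bigO0_monomial; lia.
Qed.

Definition jet4 (a0 a1 a2 a3 a4 : R) (g : R -> R) : Prop :=
  bigO0 5 (fun h => g h - poly4 a0 a1 a2 a3 a4 h).

Lemma jet4_eq a0 a1 a2 a3 a4 b0 b1 b2 b3 b4 g :
  jet4 b0 b1 b2 b3 b4 g -> b0 = a0 -> b1 = a1 -> b2 = a2 -> b3 = a3 -> b4 = a4 ->
  jet4 a0 a1 a2 a3 a4 g.
Proof. intros Hg -> -> -> -> ->. exact Hg. Qed.

Lemma jet4_ext a0 a1 a2 a3 a4 g k :
  (forall h, 0 < h -> g h = k h) -> jet4 a0 a1 a2 a3 a4 k -> jet4 a0 a1 a2 a3 a4 g.
Proof. intros Hgk. apply bigO0_ext. intros h Hh. now rewrite Hgk. Qed.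

Lemma jet4_sub_const a0 a1 a2 a3 a4 g :
  jet4 a0 a1 a2 a3 a4 g -> bigO0 1 (fun h => g h - a0).
Proof.
  intros Hg.
  apply (bigO0_ext _ _ (fun h => (g h - poly4 a0 a1 a2 a3 a4 h) + h ^ 1 * poly4 a1 a2 a3 a4 0 h));
    [intros; unfold poly4; ring|].
  apply bigO0_plus; [exact (bigO0_weaken 1 5 _ ltac:(lia) Hg)|].
  exact (bigO0_mult 1 0 _ _ (bigO0_pow 1) (bigO0_poly4 _ _ _ _ _)).
Qed.

Lemma jet4_bounded a0 a1 a2 a3 a4 g : jet4 a0 a1 a2 a3 a4 g -> bigO0 0 g.
Proof.
  intros Hg. apply (bigO0_ext _ _ (fun h => (g h - a0) + a0)); [intros; ring|].
  apply bigO0_plus; [|apply bigO0_const].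
  exact (bigO0_weaken 0 1 _ ltac:(lia) (jet4_sub_const _ _ _ _ _ _ Hg)).
Qed.

Lemma jet4_id : jet4 0 1 0 0 0 (fun h => h).
Proof.
  apply (bigO0_ext _ _ (fun h => 0 * h ^ 5)); [intros; unfold poly4; ring|].
  apply bigO0_monomial; lia.
Qed.

Lemma jet4_const c : jet4 c 0 0 0 0 (fun _ => c).
Proof.
  apply (bigO0_ext _ _ (fun h => 0 * h ^ 5)); [intros; unfold poly4; ring|].
  apply bigO0_monomial; lia.
Qed.

Lemma jet4_plus a0 a1 a2 a3 a4 b0 b1 b2 b3 b4 g k :
  jet4 a0 a1 a2 a3 a4 g -> jet4 b0 b1 b2 b3 b4 k ->
  jet4 (a0 + b0) (a1 + b1) (a2 + b2) (a3 + b3) (a4 + b4) (fun h => g h + k h).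
Proof.
  intros Hg Hk. eapply bigO0_ext; [|exact (bigO0_plus _ _ _ Hg Hk)].
  intros; unfold poly4; ring.
Qed.

Lemma jet4_minus a0 a1 a2 a3 a4 b0 b1 b2 b3 b4 g k :
  jet4 a0 a1 a2 a3 a4 g -> jet4 b0 b1 b2 b3 b4 k ->
  jet4 (a0 - b0) (a1 - b1) (a2 - b2) (a3 - b3) (a4 - b4) (fun h => g h - k h).
Proof.
  intros Hg Hk. eapply bigO0_ext; [|exact (bigO0_minus _ _ _ Hg Hk)].
  intros; unfold poly4; ring.
Qed.

Lemma jet4_div_const a0 a1 a2 a3 a4 c g :
  jet4 a0 a1 a2 a3 a4 g ->
  jet4 (a0 / c) (a1 / c) (a2 / c) (a3 / c) (a4 / c) (fun h => g h / c).
Proof.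
  intros Hg. eapply bigO0_ext; [|exact (bigO0_scal _ (/ c) _ Hg)].
  intros; unfold poly4, Rdiv; ring.
Qed.

(* The product of the truncations differs from the truncated product by h^5 times a cubic. *)
Lemma jet4_mult a0 a1 a2 a3 a4 b0 b1 b2 b3 b4 g k :
  jet4 a0 a1 a2 a3 a4 g -> jet4 b0 b1 b2 b3 b4 k ->
  jet4 (a0 * b0) (a0 * b1 + a1 * b0) (a0 * b2 + a1 * b1 + a2 * b0)
       (a0 * b3 + a1 * b2 + a2 * b1 + a3 * b0)
       (a0 * b4 + a1 * b3 + a2 * b2 + a3 * b1 + a4 * b0) (fun h => g h * k h).
Proof.
  intros Hg Hk.
  set (P := poly4 a0 a1 a2 a3 a4). set (Q := poly4 b0 b1 b2 b3 b4).
  apply (bigO0_ext _ _ (fun h =>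
     (g h - P h) * k h + P h * (k h - Q h)
     + h ^ 5 * poly4 (a1 * b4 + a2 * b3 + a3 * b2 + a4 * b1) (a2 * b4 + a3 * b3 + a4 * b2)
                     (a3 * b4 + a4 * b3) (a4 * b4) 0 h));
    [intros; unfold P, Q, poly4; ring|].
  repeat apply bigO0_plus.
  - exact (bigO0_mult 5 0 _ _ Hg (jet4_bounded _ _ _ _ _ _ Hk)).
  - exact (bigO0_mult 0 5 _ _ (bigO0_poly4 _ _ _ _ _) Hk).
  - exact (bigO0_mult 5 0 _ _ (bigO0_pow 5) (bigO0_poly4 _ _ _ _ _)).
Qed.

Lemma jet4_div_id a1 a2 a3 a4 g :
  jet4 0 a1 a2 a3 a4 g ->
  bigO0 4 (fun h => g h / h - (a1 + a2 * h + a3 * h ^ 2 + a4 * h ^ 3)).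
Proof.
  intros Hg. apply bigO0_div_id in Hg. eapply bigO0_ext; [|exact Hg].
  intros h Hh. unfold poly4. field. lra.
Qed.

(* Powers must first be unfolded with [cbn [pow]]; leaves other than constants and
   [h] must be jets available in the context. *)
Ltac jet4_solve :=
  match goal with
  | |- jet4 _ _ _ _ _ (fun _ => ?c) => apply jet4_const
  | |- jet4 _ _ _ _ _ (fun h => h) => apply jet4_id
  | |- jet4 _ _ _ _ _ (fun h => @?g h + @?k h) =>
      eapply (jet4_plus _ _ _ _ _ _ _ _ _ _ g k); [jet4_solve | jet4_solve]
  | |- jet4 _ _ _ _ _ (fun h => @?g h - @?k h) =>
      eapply (jet4_minus _ _ _ _ _ _ _ _ _ _ g k); [jet4_solve | jet4_solve]
  | |- jet4 _ _ _ _ _ (fun h => @?g h * @?k h) =>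
      eapply (jet4_mult _ _ _ _ _ _ _ _ _ _ g k); [jet4_solve | jet4_solve]
  | |- jet4 _ _ _ _ _ (fun h => @?g h / ?c) =>
      eapply (jet4_div_const _ _ _ _ _ c g); jet4_solve
  | _ => solve [eauto]
  end.

Definition expansion4_at (F : R -> R) (a t0 t1 t2 t3 t4 : R) : Prop :=
  exists M d, 0 < d /\ forall e, Rabs e < d ->
    Rabs (F (a + e) - poly4 t0 t1 t2 t3 t4 e) <= M * Rabs e ^ 5.

Lemma expansion4_at_comp F a t0 t1 t2 t3 t4 g :
  expansion4_at F a t0 t1 t2 t3 t4 -> bigO0 1 (fun h => g h - a) ->
  bigO0 5 (fun h => F (g h) - poly4 t0 t1 t2 t3 t4 (g h - a)).
Proof.
  intros [M [d [Hd HF]]] [K [d1 [Hd1 Hg]]].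
  assert (HK : 0 < Rabs K + 1) by (pose proof (Rabs_pos K); lra).
  exists (Rabs M * Rabs K ^ 5), (Rmin d1 (d / (Rabs K + 1))).
  split; [apply Rmin_pos; [exact Hd1 | now apply Rdiv_lt_0_compat]|].
  intros h [Hh0 Hh]. apply Rmin_Rgt_l in Hh as [Hh1 Hh2].
  apply Rlt_div_r in Hh2; [|exact HK].
  assert (Hgh : Rabs (g h - a) <= Rabs K * h).
  { eapply Rle_trans; [apply (Hg h (conj Hh0 Hh1))|].
    rewrite pow_1. apply Rmult_le_compat_r; [lra | apply Rle_abs]. }
  assert (He : Rabs (g h - a) < d) by (pose proof (Rabs_pos K); nra).
  specialize (HF _ He). replace (a + (g h - a)) with (g h) in HF by ring.
  eapply Rle_trans; [exact HF|].
  rewrite Rmult_assoc, <- Rpow_mult_distr.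
  apply Rle_trans with (Rabs M * Rabs (g h - a) ^ 5).
  - apply Rmult_le_compat_r; [apply pow_le, Rabs_pos | apply Rle_abs].
  - apply Rmult_le_compat_l; [apply Rabs_pos|].
    apply pow_incr. split; [apply Rabs_pos | exact Hgh].
Qed.

Lemma jet4_comp F a t0 t1 t2 t3 t4 a1 a2 a3 a4 g :
  expansion4_at F a t0 t1 t2 t3 t4 -> jet4 a a1 a2 a3 a4 g ->
  jet4 t0 (t1 * a1) (t1 * a2 + t2 * a1 ^ 2)
       (t1 * a3 + 2 * t2 * a1 * a2 + t3 * a1 ^ 3)
       (t1 * a4 + t2 * (2 * a1 * a3 + a2 ^ 2) + 3 * t3 * a1 ^ 2 * a2 + t4 * a1 ^ 4)
       (fun h => F (g h)).
Proof.
  intros HF Hg.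
  apply (bigO0_ext _ _ (fun h => (F (g h) - poly4 t0 t1 t2 t3 t4 (g h - a))
     + (poly4 t0 t1 t2 t3 t4 (g h - a)
        - poly4 t0 (t1 * a1) (t1 * a2 + t2 * a1 ^ 2)
            (t1 * a3 + 2 * t2 * a1 * a2 + t3 * a1 ^ 3)
            (t1 * a4 + t2 * (2 * a1 * a3 + a2 ^ 2) + 3 * t3 * a1 ^ 2 * a2 + t4 * a1 ^ 4) h)));
    [intros; ring|].
  apply bigO0_plus.
  - exact (expansion4_at_comp _ _ _ _ _ _ _ _ HF (jet4_sub_const _ _ _ _ _ _ Hg)).
  - change (jet4 t0 (t1 * a1) (t1 * a2 + t2 * a1 ^ 2)
       (t1 * a3 + 2 * t2 * a1 * a2 + t3 * a1 ^ 3)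
       (t1 * a4 + t2 * (2 * a1 * a3 + a2 ^ 2) + 3 * t3 * a1 ^ 2 * a2 + t4 * a1 ^ 4)
       (fun h => poly4 t0 t1 t2 t3 t4 (g h - a))).
    eapply jet4_eq; [unfold poly4; cbn [pow]; jet4_solve | ring ..].
Qed.

Lemma jet4_shift u x0 t0 t1 t2 t3 t4 c :
  expansion4_at u x0 t0 t1 t2 t3 t4 ->
  jet4 t0 (c * t1) (c ^ 2 * t2) (c ^ 3 * t3) (c ^ 4 * t4) (fun h => u (x0 + c * h)).
Proof.
  intros Hu.
  assert (Hlin : jet4 x0 c 0 0 0 (fun h => x0 + c * h))
    by (eapply jet4_eq; [jet4_solve | ring ..]).
  eapply jet4_eq; [exact (jet4_comp _ _ _ _ _ _ _ _ _ _ _ _ Hu Hlin) | ring ..].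
Qed.

(** * Taylor expansions of smooth functions *)

Lemma smooth1_ex_derive_n g : smooth1 g -> forall k x, ex_derive_n g k x.
Proof. intros Hg [|k] x; [exact I | exact (Hg k x)]. Qed.

Lemma smooth1_Derive_n g m : smooth1 g -> smooth1 (Derive_n g m).
Proof.
  intros Hg n x. apply (ex_derive_ext (Derive_n g (n + m))); [|apply Hg].
  intros t. symmetry. apply Derive_n_comp.
Qed.

Lemma smooth1_comp_opp g : smooth1 g -> smooth1 (fun x => g (- x)).
Proof.
  intros Hg n x.
  apply (ex_derive_ext (fun y => (-1) ^ n * Derive_n g n (- y))).
  - intros y. symmetry. apply Derive_n_comp_opp.
    apply filter_forall. intros z k _. now apply smooth1_ex_derive_n.
  - apply ex_derive_scal, (ex_derive_comp (Derive_n g n) Ropp); [apply Hg|].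
    now auto_derive.
Qed.

Lemma continuous_locally_bounded (F : R -> R) a :
  continuous F a ->
  exists d, 0 < d /\ forall y, Rabs (y - a) < d -> Rabs (F y) <= Rabs (F a) + 1.
Proof.
  intros HF. destruct (proj1 (filterlim_locally F (F a)) HF (mkposreal 1 Rlt_0_1)) as [d Hd].
  exists d. split; [apply cond_pos|]. intros y Hy.
  specialize (Hd y Hy). change (Rabs (F y - F a) < 1) in Hd.
  pose proof (Rabs_triang_inv (F y) (F a)). lra.
Qed.

Lemma taylor_right g n a :
  smooth1 g ->
  exists M d, 0 < d /\ forall e, 0 < e < d ->
    Rabs (g (a + e) - sum_f_R0 (fun k => e ^ k / INR (fact k) * Derive_n g k a) n)
      <= M * e ^ S n.
Proof.
  intros Hg.
  destruct (continuous_locally_bounded (Derive_n g (S n)) a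
              (ex_derive_continuous _ _ (Hg (S n) a))) as [d [Hd HB]].
  exists (Rabs (Derive_n g (S n) a) + 1), d. split; [exact Hd|].
  intros e He.
  destruct (Taylor_Lagrange g n a (a + e)) as [z [Hz Hg_eq]]; [lra|..].
  { intros t _ k _. now apply smooth1_ex_derive_n. }
  rewrite Hg_eq. replace (a + e - a) with e by ring.
  replace (_ + _ - _) with (e ^ S n / INR (fact (S n)) * Derive_n g (S n) z) by ring.
  assert (Hfact : 1 <= INR (fact (S n))) by apply (le_INR 1), lt_O_fact.
  assert (Hpow : 0 < e ^ S n) by (apply pow_lt; lra).
  assert (Hz_bound : Rabs (Derive_n g (S n) z) <= Rabs (Derive_n g (S n) a) + 1)
    by (apply HB; rewrite Rabs_pos_eq; lra).
  rewrite Rabs_mult, Rabs_div, !Rabs_pos_eq by lra.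
  apply Rle_trans with (e ^ S n * Rabs (Derive_n g (S n) z)); [|nra].
  apply Rmult_le_compat_r; [apply Rabs_pos|].
  apply Rmult_le_reg_r with (INR (fact (S n))); [lra|].
  unfold Rdiv. rewrite Rmult_assoc, Rinv_l by lra. nra.
Qed.

Lemma taylor_sum_at_0 (c : nat -> R) n :
  sum_f_R0 (fun k => 0 ^ k / INR (fact k) * c k) n = c 0%nat.
Proof.
  induction n as [|n IH]; cbn [sum_f_R0]; [simpl; field|].
  rewrite IH, pow_i by lia. unfold Rdiv. ring.
Qed.

Lemma taylor_sum_comp_opp g n a e :
  smooth1 g ->
  sum_f_R0 (fun k => (- e) ^ k / INR (fact k) * Derive_n (fun x => g (- x)) k (- a)) n
  = sum_f_R0 (fun k => e ^ k / INR (fact k) * Derive_n g k a) n.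
Proof.
  intros Hg. apply sum_eq. intros k _.
  rewrite Derive_n_comp_opp, Ropp_involutive.
  - replace (- e) with (-1 * e) by ring. rewrite Rpow_mult_distr.
    replace ((-1) ^ k * e ^ k / INR (fact k) * ((-1) ^ k * Derive_n g k a))
      with (((-1) ^ k * (-1) ^ k) * (e ^ k / INR (fact k) * Derive_n g k a))
      by (unfold Rdiv; ring).
    rewrite <- Rpow_mult_distr. replace (-1 * -1) with 1 by ring. rewrite pow1. ring.
  - apply filter_forall. intros z j _. now apply smooth1_ex_derive_n.
Qed.

(* Lagrange's form of the remainder is one-sided; the left side is the right side
   of [x |-> g (-x)]. *)
Lemma taylor_bound g n a :
  smooth1 g ->
  exists M d, 0 < d /\ forall e, Rabs e < d ->
    Rabs (g (a + e) - sum_f_R0 (fun k => e ^ k / INR (fact k) * Derive_n g k a) n)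
      <= M * Rabs e ^ S n.
Proof.
  intros Hg.
  destruct (taylor_right g n a Hg) as [M1 [d1 [Hd1 H1]]].
  destruct (taylor_right _ n (- a) (smooth1_comp_opp g Hg)) as [M2 [d2 [Hd2 H2]]].
  exists (Rabs M1 + Rabs M2), (Rmin d1 d2). split; [now apply Rmin_pos|].
  intros e He. apply Rmin_Rgt_l in He as [He1 He2].
  assert (Habs : 0 <= Rabs e ^ S n) by apply pow_le, Rabs_pos.
  pose proof (Rle_abs M1). pose proof (Rle_abs M2).
  pose proof (Rabs_pos M1). pose proof (Rabs_pos M2).
  destruct (Rtotal_order e 0) as [Hneg|[->|Hpos]].
  - rewrite (Rabs_left e Hneg) in He1, He2, Habs |- *.
    specialize (H2 (- e) ltac:(lra)).
    rewrite taylor_sum_comp_opp in H2 by exact Hg.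
    replace (- (- a + - e)) with (a + e) in H2 by ring. nra.
  - rewrite taylor_sum_at_0, Rplus_0_r. change (Derive_n g 0 a) with (g a).
    rewrite Rminus_diag, !Rabs_R0, pow_i by lia. lra.
  - rewrite (Rabs_pos_eq e) in He1, He2, Habs |- * by lra.
    specialize (H1 e ltac:(lra)). nra.
Qed.

Lemma expansion4_Derive_n g m a :
  smooth1 g ->
  expansion4_at (Derive_n g m) a (Derive_n g m a) (Derive_n g (1 + m) a)
    (Derive_n g (2 + m) a / 2) (Derive_n g (3 + m) a / 6) (Derive_n g (4 + m) a / 24).
Proof.
  intros Hg.
  destruct (taylor_bound (Derive_n g m) 4 a (smooth1_Derive_n g m Hg)) as [M [d [Hd HT]]].
  exists M, d. split; [exact Hd|]. intros e He.
  replace (poly4 _ _ _ _ _ e)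
    with (sum_f_R0 (fun k => e ^ k / INR (fact k) * Derive_n (Derive_n g m) k a) 4);
    [exact (HT e He)|].
  cbn [sum_f_R0]. rewrite !Derive_n_comp. cbn [fact INR Nat.add Nat.mul].
  unfold poly4. field.
Qed.

(** * Symmetric dissipation coefficients *)

Lemma Derive_n_dpart (G : R -> R -> R) v k x :
  Derive_n (fun t => G v t) k x = dpart (List.repeat false k) G v x.
Proof.
  revert x. induction k as [|k IH]; intros x; [reflexivity|].
  simpl. apply Derive_ext. exact IH.
Qed.

Lemma smooth2_smooth1_r G v : smooth2 G -> smooth1 (fun t => G v t).
Proof.
  intros HG k x. eapply ex_derive_ext; [intros t; symmetry; apply Derive_n_dpart|].
  apply (HG (List.repeat false k) v x).
Qed.

(* Mean value theorem in the second variable, then joint continuity of the second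
   partial derivative at (v, v). *)
Lemma slope_r_near_diag G v :
  smooth2 G -> forall eps : posreal, exists d : posreal, forall s e,
    Rabs (s - v) < d -> e <> 0 -> Rabs e < d ->
    Rabs ((G s (v + e) - G s v) / e - Derive (fun t => G v t) v) < eps.
Proof.
  intros HG eps.
  destruct (HG (cons false nil) v v) as [_ [_ Hcont]].
  destruct (proj1 (filterlim_locally _ _) Hcont eps) as [d Hd].
  exists d. intros s e Hs He0 He.
  destruct (MVT_gen (fun t => G s t) v (v + e) (fun t => dpart (cons false nil) G s t))
    as [eta [Heta Hmvt]].
  { intros t _. apply Derive_correct. exact (proj1 (proj2 (HG nil s t))). }
  { intros t _. apply (proj2 (continuity_pt_filterlim _ _)).
    apply (@ex_derive_continuous R_AbsRing R_NormedModule).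
    exact (proj1 (proj2 (HG nil s t))). }
  replace ((G s (v + e) - G s v) / e) with (dpart (cons false nil) G s eta)
    by (rewrite Hmvt; field; exact He0).
  apply (Hd (s, eta)). split; [exact Hs|].
  change (Rabs (eta - v) < d).
  unfold Rmin, Rmax in Heta. destruct (Rle_dec v (v + e)); apply Rabs_def1;
    pose proof (Rabs_def2 _ _ He); lra.
Qed.

(* By symmetry both halves of [G (v+e) (v+e) - G v v] are increments in the second variable. *)
Lemma is_derive_diag_sym G v :
  smooth2 G -> (forall s t, G s t = G t s) ->
  is_derive (fun t => G t t) v (2 * Derive (fun t => G v t) v).
Proof.
  intros HG Hsym. apply is_derive_Reals. intros eps Heps.
  destruct (slope_r_near_diag G v HG (mkposreal (eps / 2) ltac:(lra))) as [d Hd].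
  exists d. intros e He0 He.
  pose proof (Hd (v + e) e ltac:(now replace (v + e - v) with e by ring) He0 He) as H1.
  pose proof (Hd v e ltac:(rewrite Rminus_diag, Rabs_R0; apply cond_pos) He0 He) as H2.
  simpl in H1, H2. rewrite (Hsym (v + e) v) in H1.
  replace ((G (v + e) (v + e) - G v v) / e - 2 * Derive (fun t => G v t) v)
    with (((G (v + e) (v + e) - G v (v + e)) / e - Derive (fun t => G v t) v)
          + ((G v (v + e) - G v v) / e - Derive (fun t => G v t) v))
    by (field; exact He0).
  eapply Rle_lt_trans; [apply Rabs_triang | lra].
Qed.

(** * The scheme with kappa3 = 0 *)

Definition muscl_L (kappa a b c : R) : R :=
  kappa * ((b + c) / 2) + (1 - kappa) * (b + (c - a) / 4).

Definition muscl_R (kappa b c d : R) : R :=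
  kappa * ((b + c) / 2) + (1 - kappa) * (c - (d - b) / 4).

Definition qflux (f : R -> R) (theta2 v w : R) : R :=
  f v + Derive f v * (w - v) + theta2 / 2 * Derive_n f 2 v * (w - v) ^ 2.

Definition face_flux (f : R -> R) (Dbar : R -> R -> R) (kappa theta2 a b c d : R) : R :=
  1 / 2 * (qflux f theta2 b (muscl_L kappa a b c) + qflux f theta2 c (muscl_R kappa b c d))
  - 1 / 2 * Dbar b c * (muscl_R kappa b c d - muscl_L kappa a b c).

Lemma uL_kappa3_0 kappa U h i :
  h <> 0 -> uL kappa 0 U h i = muscl_L kappa (U (i - 1)%Z) (U i) (U (i + 1)%Z).
Proof. intros Hh. unfold uL, muscl_L, ux. field. exact Hh. Qed.

Lemma uR_kappa3_0 kappa U h i :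
  h <> 0 -> uR kappa 0 U h i = muscl_R kappa (U i) (U (i + 1)%Z) (U (i + 2)%Z).
Proof.
  intros Hh. unfold uR, muscl_R, ux.
  replace (i + 1 + 1)%Z with (i + 2)%Z by ring. replace (i + 1 - 1)%Z with i by ring.
  field. exact Hh.
Qed.

Lemma Phi_kappa3_0 f Dbar kappa theta2 U h i :
  h <> 0 ->
  Phi f Dbar kappa 0 theta2 U h i
  = face_flux f Dbar kappa theta2 (U (i - 1)%Z) (U i) (U (i + 1)%Z) (U (i + 2)%Z).
Proof.
  intros Hh. unfold Phi, fL, fR. rewrite uL_kappa3_0, uR_kappa3_0 by exact Hh.
  reflexivity.
Qed.

Lemma Err_nodes_kappa3_0 f Dbar kappa theta2 u x0 h :
  h <> 0 ->
  Err f Dbar kappa 0 theta2 (nodes u x0 h) h 0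
  = (face_flux f Dbar kappa theta2
       (nodes u x0 h (-1)) (u x0) (nodes u x0 h 1) (nodes u x0 h 2)
     - face_flux f Dbar kappa theta2
         (nodes u x0 h (-2)) (nodes u x0 h (-1)) (u x0) (nodes u x0 h 1)) / h.
Proof.
  intros Hh. unfold Err. rewrite !Phi_kappa3_0 by exact Hh.
  simpl. replace (nodes u x0 h 0) with (u x0) by (unfold nodes; f_equal; ring).
  reflexivity.
Qed.

Lemma flux_difference_jet f u Dbar kappa theta2 x0 :
  smooth1 f -> smooth1 u -> smooth2 Dbar -> (forall v w, Dbar v w = Dbar w v) ->
  jet4 0 (Derive u x0 * Derive f (u x0)) 0
    (1 / 4 * ((kappa - 1 / 3) * Derive f (u x0) * Derive_n u 3 x0
              + (kappa + theta2 - 1) * Derive_n f 2 (u x0) * Derive u x0 * Derive_n u 2 x0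
              + 1 / 2 * (theta2 - 2 / 3) * Derive_n f 3 (u x0) * Derive u x0 ^ 3))
    (- ((kappa - 1) / 8
        * (Derive u x0 * (2 * Derive (fun t => Dbar (u x0) t) (u x0)) * Derive_n u 3 x0
           + Dbar (u x0) (u x0) * Derive_n u 4 x0)))
    (fun h => face_flux f Dbar kappa theta2
                (nodes u x0 h (-1)) (u x0) (nodes u x0 h 1) (nodes u x0 h 2)
              - face_flux f Dbar kappa theta2
                  (nodes u x0 h (-2)) (nodes u x0 h (-1)) (u x0) (nodes u x0 h 1)).
Proof.
  intros Hf Hu HDbar Hsym.
  pose proof (expansion4_Derive_n u 0 x0 Hu) as Tu.
  pose proof (expansion4_Derive_n f 0 (u x0) Hf) as Tf.
  pose proof (expansion4_Derive_n f 1 (u x0) Hf) as Tf1.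
  pose proof (expansion4_Derive_n f 2 (u x0) Hf) as Tf2.
  pose proof (expansion4_Derive_n _ 0 (u x0) (smooth2_smooth1_r Dbar (u x0) HDbar)) as TD.
  cbn [Nat.add] in Tu, Tf, Tf1, Tf2, TD.
  change (Derive_n u 0) with u in Tu. change (Derive_n u 1) with (Derive u) in Tu.
  change (Derive_n f 0) with f in Tf. change (Derive_n f 1) with (Derive f) in Tf, Tf1.
  change (Derive_n (fun t => Dbar (u x0) t) 0) with (fun t => Dbar (u x0) t) in TD.
  change (Derive_n (fun t => Dbar (u x0) t) 1) with (Derive (fun t => Dbar (u x0) t)) in TD.
  assert (HU : forall k, jet4 (u x0) (IZR k * Derive u x0) (IZR k ^ 2 * (Derive_n u 2 x0 / 2))
                 (IZR k ^ 3 * (Derive_n u 3 x0 / 6)) (IZR k ^ 4 * (Derive_n u 4 x0 / 24))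
                 (fun h => nodes u x0 h k))
    by (intros k; exact (jet4_shift _ _ _ _ _ _ _ (IZR k) Tu)).
  pose proof (fun k => jet4_comp _ _ _ _ _ _ _ _ _ _ _ _ Tf (HU k)) as HF.
  pose proof (fun k => jet4_comp _ _ _ _ _ _ _ _ _ _ _ _ Tf1 (HU k)) as HF1.
  pose proof (fun k => jet4_comp _ _ _ _ _ _ _ _ _ _ _ _ Tf2 (HU k)) as HF2.
  pose proof (fun k => jet4_comp _ _ _ _ _ _ _ _ _ _ _ _ TD (HU k)) as HDbar_r.
  cbv beta in HDbar_r.
  pose proof (fun k => jet4_ext _ _ _ _ _ (fun h => Dbar (nodes u x0 h k) (u x0)) _
                         (fun h _ => Hsym _ _) (HDbar_r k)) as HDbar_l.
  unfold face_flux, qflux, muscl_L, muscl_R. cbn [pow].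
  eapply jet4_eq; [jet4_solve | field ..].
Qed.

Lemma Err_expansion f D u Dbar kappa theta2 x0 :
  smooth1 f -> smooth1 u -> smooth2 Dbar ->
  (forall v w, Dbar v w = Dbar w v) -> (forall v, Dbar v v = D v) ->
  bigO0 4 (fun h => Err f Dbar kappa 0 theta2 (nodes u x0 h) h 0
    - (Derive (fun x => f (u x)) x0
       + 1 / 4 * ((kappa - 1 / 3) * Derive f (u x0) * Derive_n u 3 x0
                  + (kappa + theta2 - 1) * Derive_n f 2 (u x0) * Derive u x0 * Derive_n u 2 x0
                  + 1 / 2 * (theta2 - 2 / 3) * Derive_n f 3 (u x0) * Derive u x0 ^ 3) * h ^ 2
       - (kappa - 1) / 8 * (Derive (fun x => D (u x)) x0 * Derive_n u 3 x0
                            + D (u x0) * Derive_n u 4 x0) * h ^ 3)).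
Proof.
  intros Hf Hu HDbar Hsym Hdiag.
  assert (HD : is_derive D (u x0) (2 * Derive (fun t => Dbar (u x0) t) (u x0))).
  { apply (is_derive_ext (fun t => Dbar t t)); [exact Hdiag|].
    exact (is_derive_diag_sym Dbar (u x0) HDbar Hsym). }
  assert (Hfx : Derive (fun x => f (u x)) x0 = Derive u x0 * Derive f (u x0))
    by (apply Derive_comp; [apply (Hf 0%nat) | apply (Hu 0%nat)]).
  assert (HDx : Derive (fun x => D (u x)) x0
                = Derive u x0 * (2 * Derive (fun t => Dbar (u x0) t) (u x0))).
  { rewrite Derive_comp; [|eexists; exact HD | apply (Hu 0%nat)].
    now rewrite (is_derive_unique _ _ _ HD). }
  eapply bigO0_ext;
    [|exact (jet4_div_id _ _ _ _ _
               (flux_difference_jet f u Dbar kappa theta2 x0 Hf Hu HDbar Hsym))].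
  intros h Hh. rewrite Err_nodes_kappa3_0 by lra. rewrite Hfx, HDx, <- Hdiag. ring.
Qed.

Theorem mainTheorem6
  (f D u : R -> R) (Dbar : R -> R -> R) (kappa kappa3 theta2 : R)
  (Hf : smooth1 f) (HD : smooth1 D) (Hu : smooth1 u) (HDbar : smooth2 Dbar)
  (HDbar_sym : forall v w, Dbar v w = Dbar w v)
  (HDbar_diag : forall v, Dbar v v = D v)
  (Hk3 : kappa3 = 0) (x0 : R) :
  let E := fun h => Err f Dbar kappa kappa3 theta2 (nodes u x0 h) h 0%Z in
  let u0 := u x0 in
  let u1 := Derive u x0 in
  let u2 := Derive_n u 2 x0 in
  let u3 := Derive_n u 3 x0 in
  let u4 := Derive_n u 4 x0 in
  let fx := Derive (fun x => f (u x)) x0 in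
  let Dx := Derive (fun x => D (u x)) x0 in
  let f1 := Derive f u0 in
  let f2 := Derive_n f 2 u0 in
  let f3 := Derive_n f 3 u0 in
  (exists C delta : R, 0 < delta /\
     forall h : R, 0 < h < delta ->
       Rabs (E h
             - (fx
                + 1 / 4 * ((kappa - 1 / 3) * f1 * u3
                           + (kappa + theta2 - 1) * f2 * u1 * u2
                           + 1 / 2 * (theta2 - 2 / 3) * f3 * u1 ^ 3) * h ^ 2
                - (kappa - 1) / 8 * (Dx * u3 + D u0 * u4) * h ^ 3))
       <= C * h ^ 4)
  /\
  (kappa = 1 / 3 -> theta2 = 2 / 3 ->
   exists C delta : R, 0 < delta /\
     forall h : R, 0 < h < delta -> Rabs (E h - fx) <= C * h ^ 3).
Proof.
  intros E u0 u1 u2 u3 u4 fx Dx f1 f2 f3. subst kappa3.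
  pose proof (Err_expansion f D u Dbar kappa theta2 x0 Hf Hu HDbar HDbar_sym HDbar_diag)
    as Hexp.
  split; [exact Hexp|].
  intros -> ->. apply (bigO0_third_order E fx _ _ Hexp). field.
Qed.
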